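(* Let $\mathcal{G}$ be a finite weighted coloured--edge graph with $n\ge 2$ vertices and $k$ colours, and let $u\ne v$ be vertices. Then any set $S$ of minimal paths from $u$ to $v$ that are pairwise incomparable has $|S|\le k^{n-1}$. Equivalently, the set of distinct weight vectors $(\omega_c(p))_{c\in M}$ of minimal paths $p$ from $u$ to $v$ has at most $k^{n-1}$ elements.
   Context: A weighted coloured--edge graph $\mathcal{G}=\langle V,E,\omega,\lambda\rangle$ consists of a directed multigraph with vertex set $V$ and edge set $E$ (each edge $e$ has an initial vertex and a distinct terminal vertex; multiple edges between the same ordered pair are allowed), a weight function $\omega:E\to\mathbb{R}^+$ (strictly positive reals), and a surjective colour function $\lambda:E\to M$ onto a set $M$ of colours; $k=|M|$. A path from $u$ to $v$ is a sequence of edges $e_1,\dots,e_l$ ($l\ge1$) such that the initial vertex of $e_1$ is $u$, the terminal vertex of $e_l$ is $v$, the terminal vertex of $e_i$ is the initial vertex of $e_{i+1}$, and no vertex is visited twice. For a path $p$ and colour $c$, $\omega_c(p)$ is the sum of $\omega(e)$ over edges $e$ of $p$ with $\lambda(e)=c$. For paths $p,q$ from $u$ to $v$, $p\le q$ means $\omega_c(p)\le\omega_c(q)$ for all $c\in M$; $p,q$ are incomparable if neither $p\le q$ nor $q\le p$. A path $p$ from $u$ to $v$ is minimal if there is no path $q$ from $u$ to $v$ with $q\le p$ and $\omega_c(q)<\omega_c(p)$ for some colour $c$. *)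

From HB Require Import structures.
From mathcomp Require Import all_boot all_order all_algebra.
Set Implicit Arguments. Unset Strict Implicit. Unset Printing Implicit Defensive.
Import Order.TTheory GRing.Theory Num.Theory.
Local Open Scope ring_scope.

Record wcgraph (R : realFieldType) (V E M : finType) := WCGraph {
  src : E -> V;
  dst : E -> V;
  w : E -> R;
  col : E -> M
}.

Definition wf_wcgraph (R : realFieldType) (V E M : finType)
  (G : wcgraph R V E M) : Prop :=
  (forall e, src G e != dst G e) /\
  (forall e, 0 < w G e) /\
  (forall c : M, exists e, col G e = c).

Definition is_path (R : realFieldType) (V E M : finType)
  (G : wcgraph R V E M) (u v : V) (p : seq E) : Prop :=
  match p with
  | [::] => False
  | e :: p' =>
      [/\ src G e = u,
          path (fun x y => dst G x == src G y) e p',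
          last (dst G e) [seq dst G x | x <- p'] = v &
          uniq (u :: [seq dst G x | x <- p])]
  end.

Definition wc (R : realFieldType) (V E M : finType)
  (G : wcgraph R V E M) (c : M) (p : seq E) : R :=
  \sum_(e <- p | col G e == c) w G e.

Definition path_le (R : realFieldType) (V E M : finType)
  (G : wcgraph R V E M) (p q : seq E) : Prop :=
  forall c : M, wc G c p <= wc G c q.

Definition incomparable (R : realFieldType) (V E M : finType)
  (G : wcgraph R V E M) (p q : seq E) : Prop :=
  ~ path_le G p q /\ ~ path_le G q p.

Definition minimal_path (R : realFieldType) (V E M : finType)
  (G : wcgraph R V E M) (u v : V) (p : seq E) : Prop :=
  is_path G u v p /\
  ~ (exists q, is_path G u v q /\ path_le G q p /\ exists c, wc G c q < wc G c p).

Definition wvec (R : realFieldType) (V E M : finType)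
  (G : wcgraph R V E M) (p : seq E) : {ffun M -> R} :=
  [ffun c => wc G c p].

From Pilot Require Import Defs.
From mathcomp Require Import all_boot all_order all_algebra.
From mathcomp Require Import lra.
From Stdlib Require Import ClassicalDescription.
Set Implicit Arguments. Unset Strict Implicit. Unset Printing Implicit Defensive.
Import Order.TTheory GRing.Theory Num.Theory.
Local Open Scope ring_scope.

(* We generalise the problem so that it admits an induction on the number of
   usable vertices.  A "stub" (x, c, r) is a virtual first edge of colour c
   and weight r arriving at vertex x.  Given a set B of usable vertices, a
   list L of stubs and a target v, a stub path is a stub of L followed by a
   simple walk from its head to v inside B; its weight vector is
   r * e_c + omega(walk).  We show that the minimal such vectors number at
   most k^|B| (theorem minimal_values_bound).

   The minimal vectors are sorted by the colour c of their stub.  For a fixed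
   c let l0 = (x0, c, r0) be a cheapest stub of colour c.  If x0 = v every
   minimal vector of colour c equals r0 * e_c.  Otherwise removing x0 from B,
   replacing the stubs of colour c by their costs minus r0, and adding the
   edges leaving x0 as new stubs, maps the minimal vectors of colour c
   injectively (shift by -r0 * e_c) to minimal vectors of a problem with
   |B| - 1 usable vertices (lemma reduce_minimal).  Hence k * k^(|B|-1).

   The theorem is the instance B = V \ {u}, L = the edges leaving u; the
   bound on pairwise incomparable minimal paths follows since such paths have
   pairwise distinct weight vectors. *)

Lemma cover_bound (T : eqType) (I : finType) (P : I -> T -> Prop) (N : nat)
    (W : seq T) :
  uniq W -> (forall f, f \in W -> exists c, P c f) ->
  (forall c (W' : seq T), uniq W' -> (forall f, f \in W' -> P c f) ->
     (size W' <= N)%N) ->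
  (size W <= #|I| * N)%N.
Proof.
move=> uW covW boundP.
pose Pb c f : bool := if excluded_middle_informative (P c f) then true else false.
have PbP c f : reflect (P c f) (Pb c f).
  by rewrite /Pb; case: excluded_middle_informative => H; constructor.
have size_le_sum : (size W <= \sum_(c : I) size (filter (Pb c) W))%N.
  elim: W covW {uW} => [|f W IH] covW //=.
  have -> : (\sum_(c : I) size (if Pb c f then f :: filter (Pb c) W
                                 else filter (Pb c) W)
           = \sum_(c : I) Pb c f + \sum_(c : I) size (filter (Pb c) W))%N.
    by rewrite -big_split; apply: eq_bigr => c _; case: (Pb c f).
  have [c /PbP Pcf] := covW f (mem_head _ _).
  rewrite -add1n leq_add //; first by rewrite (bigD1 c) //= Pcf.
  by apply: IH => g gW; apply: covW; rewrite inE gW orbT.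
rewrite -sum_nat_const; apply: (leq_trans size_le_sum); apply: leq_sum => c _.
apply: (boundP c) => [|f]; first exact: filter_uniq.
by rewrite mem_filter => /andP[/PbP Pcf _].
Qed.

Lemma seq_argmin (T : eqType) (d : Order.disp_t) (O : orderType d)
    (key : T -> O) (s : seq T) :
  s != [::] -> exists2 a, a \in s & forall b, b \in s -> (key a <= key b)%O.
Proof.
elim: s => // a s IH _.
have [-> | /IH [b bs bmin]] := eqVneq s [::].
  by exists a; rewrite ?mem_head // => b; rewrite inE => /eqP ->.
have [ab | ba] := leP (key a) (key b).
  exists a => [|c]; first exact: mem_head.
  by rewrite inE => /orP[/eqP -> // | /bmin]; apply: le_trans.
exists b => [|c]; first by rewrite inE bs orbT.
by rewrite inE => /orP[/eqP -> | /bmin //]; apply: ltW.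
Qed.

Lemma all_setD1 (T : finType) (B : {set T}) (a : T) (s : seq T) :
  all [in B :\ a] s = (a \notin s) && all [in B] s.
Proof.
elim: s => //= x s ->; rewrite in_setD1 in_cons negb_or [x == a]eq_sym.
by case: (a == x); case: (x \in B); case: (a \in s).
Qed.

Section Walks.
Variables (R : realFieldType) (V E M : finType) (G : wcgraph R V E M).

Lemma wc_nil c : wc G c [::] = 0.
Proof. by rewrite /wc big_nil. Qed.

Lemma wc_cons c e p :
  wc G c (e :: p) = (if Defs.col G e == c then w G e else 0) + wc G c p.
Proof. by rewrite /wc big_cons; case: ifP => //; rewrite add0r. Qed.

Lemma wc_cat c p q : wc G c (p ++ q) = wc G c p + wc G c q.
Proof. by rewrite /wc big_cat. Qed.

Fixpoint walk_in (B : {set V}) (x v : V) (p : seq E) : bool :=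
  (x \in B) && match p with
              | [::] => x == v
              | e :: p' => (src G e == x) && walk_in (B :\ x) (dst G e) v p'
              end.

Lemma walk_in_start B x v p : walk_in B x v p -> x \in B.
Proof. by case: p => [|e p] /andP[]. Qed.

Lemma walk_in_sub (B1 B2 : {set V}) x v p :
  B1 \subset B2 -> walk_in B1 x v p -> walk_in B2 x v p.
Proof.
elim: p B1 B2 x => [|e p IH] B1 B2 x sB /=.
  by case/andP=> xB ->; rewrite (subsetP sB).
case/and3P=> xB -> walk_p; rewrite (subsetP sB) //=.
by apply: IH walk_p; apply: setSD.
Qed.

Lemma walk_in_avoid_or_through (B : {set V}) x y v p :
  y != x -> walk_in B x v p ->
  walk_in (B :\ y) x v p \/
  exists e p1 p2, p = e :: p1 ++ p2 /\ walk_in B y v p2.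
Proof.
elim: p B x => [|e p IH] B x yx /=.
  by case/andP=> xB ->; left; rewrite in_setD1 eq_sym yx xB.
case/and3P=> xB /eqP se walk_p.
have [-> | ye] := eqVneq y (dst G e).
  by right; exists e, [::], p; split=> //; apply: walk_in_sub walk_p; apply: subsetDl.
case: (IH _ _ ye walk_p) => [walk_avoid | [e1 [p1 [p2 [-> walk_p2]]]]].
  left; rewrite in_setD1 eq_sym yx xB se eqxx /=.
  by rewrite setDDl setUC -setDDl.
right; exists e, (e1 :: p1), p2; split=> //.
by apply: walk_in_sub walk_p2; apply: subsetDl.
Qed.

Lemma walk_inE (B : {set V}) e q v :
  walk_in B (dst G e) v q =
  [&& path (fun x y => dst G x == src G y) e q,
      last (dst G e) [seq dst G x | x <- q] == v,
      uniq (dst G e :: [seq dst G x | x <- q]) &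
      all [in B] (dst G e :: [seq dst G x | x <- q])].
Proof.
elim: q e B => [|f q IH] e B /=; first by rewrite !andbT andbC.
rewrite IH all_setD1 [src G f == _]eq_sym /= -!andbA.
(* Both sides are the same nine conjuncts, in a different order. *)
by rewrite [LHS](AC (1*(1*(1*(1*(1*(1*(1*(1*1))))))))%AC
                   (2*(3*(4*(7*(5*(6*(1*(8*9))))))))%AC).
Qed.

End Walks.

Section Stubs.
Variables (R : realFieldType) (V E M : finType) (G : wcgraph R V E M).
Hypothesis w_gt0 : forall e, 0 < w G e.

Lemma wc_ge0 c p : 0 <= wc G c p.
Proof. by rewrite /wc; apply: sumr_ge0 => e _; apply: ltW. Qed.

Lemma wc_first_gt0 e p : 0 < wc G (Defs.col G e) (e :: p).
Proof. by rewrite wc_cons eqxx; have := w_gt0 e; have := wc_ge0 (Defs.col G e) p; lra. Qed.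

Definition stub : Type := (V * M * R)%type.
Definition stub_at (l : stub) : V := l.1.1.
Definition stub_col (l : stub) : M := l.1.2.
Definition stub_cost (l : stub) : R := l.2.

Definition edge_stub (e : E) : stub := (dst G e, Defs.col G e, w G e).

Definition point (c : M) (r : R) (c' : M) : R := if c' == c then r else 0.

Definition svec (l : stub) (p : seq E) (c : M) : R :=
  point (stub_col l) (stub_cost l) c + wc G c p.

Lemma svec_edge_stub e q c : svec (edge_stub e) q c = wc G c (e :: q).
Proof. by rewrite /svec /point wc_cons /= eq_sym. Qed.

Definition dominates (f g : M -> R) : Prop :=
  (forall c, f c <= g c) /\ exists c, f c < g c.

Definition stub_path (B : {set V}) (v : V) (L : seq stub) (l : stub) (p : seq E)
  : bool :=
  (l \in L) && walk_in G B (stub_at l) v p.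

Definition stub_minimal (B : {set V}) (v : V) (L : seq stub) (l : stub)
    (p : seq E) : Prop :=
  stub_path B v L l p /\
  ~ exists l' p', stub_path B v L l' p' /\ dominates (svec l' p') (svec l p).

Definition minimal_value (B : {set V}) (v : V) (L : seq stub) (c : M)
    (f : {ffun M -> R}) : Prop :=
  exists l p, [/\ stub_minimal B v L l p, stub_col l = c &
                  forall c', f c' = svec l p c'].

Definition stubs_at (B : {set V}) (L : seq stub) (c : M) : seq stub :=
  [seq l <- L | (stub_col l == c) && (stub_at l \in B)].

Lemma stubs_atP (B : {set V}) (L : seq stub) (c : M) (l : stub) :
  reflect [/\ l \in L, stub_col l = c & stub_at l \in B] (l \in stubs_at B L c).
Proof.
rewrite mem_filter; apply: (iffP idP) => [/andP[/andP[/eqP-> ->] ->] | [-> -> ->]] //.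
by rewrite eqxx.
Qed.

Lemma minimal_in_stubs_at (B : {set V}) (v : V) (L : seq stub) (l : stub) p :
  stub_minimal B v L l p -> l \in stubs_at B L (stub_col l).
Proof.
by case=> /andP[lL walk_l] _; apply/stubs_atP; split=> //; apply: walk_in_start walk_l.
Qed.

Section Reduction.
Variables (B : {set V}) (v : V) (L : seq stub) (c : M) (l0 : stub).
Hypothesis l0_in : l0 \in stubs_at B L c.
Hypothesis l0_cheapest :
  forall l, l \in stubs_at B L c -> stub_cost l0 <= stub_cost l.
Local Notation x0 := (stub_at l0).
Local Notation r0 := (stub_cost l0).

Definition reduced_stubs : seq stub :=
  [seq (stub_at l, c, stub_cost l - r0) | l <- stubs_at B L c] ++
  [seq edge_stub e | e <- enum E & src G e == x0].

Lemma lift_reduced m q :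
  stub_path (B :\ x0) v reduced_stubs m q ->
  exists l p, stub_path B v L l p /\
              forall c', svec l p c' = svec m q c' + point c r0 c'.
Proof.
have [l0L l0c l0B] := stubs_atP _ _ _ _ l0_in.
case/andP; rewrite mem_cat => /orP[] /mapP[] => [l l_in -> | e e_in ->] walk_q.
  have [lL lc lB] := stubs_atP _ _ _ _ l_in.
  exists l, q; split; first by rewrite /stub_path lL (walk_in_sub _ walk_q) ?subsetDl.
  by move=> c'; rewrite /svec /point lc /=; case: (c' == c); lra.
move: e_in; rewrite mem_filter mem_enum andbT => /eqP se.
exists l0, (e :: q); split; first by rewrite /stub_path l0L /= l0B se eqxx.
by move=> c'; rewrite svec_edge_stub /svec l0c addrC.
Qed.

Lemma minimal_from_x0_cost l p :
  stub_minimal B v L l p -> stub_col l = c -> stub_at l = x0 -> stub_cost l = r0.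
Proof.
move=> [/andP[lL walk_l] not_dom] lc lx.
have [l0L l0c _] := stubs_atP _ _ _ _ l0_in.
have r0_le : r0 <= stub_cost l by apply/l0_cheapest/stubs_atP;
  split=> //; apply: walk_in_start walk_l.
apply/eqP; rewrite eq_le r0_le andbT leNgt; apply/negP => r0_lt; apply: not_dom.
exists l0, p; split; first by rewrite /stub_path l0L -lx.
split=> [c'|]; last by exists c; rewrite /svec /point l0c lc eqxx ltrD2r.
by rewrite /svec /point l0c lc; case: (c' == c); lra.
Qed.

(* A minimal stub path of colour c starting elsewhere avoids x0: otherwise
   the cheaper stub l0 followed by the rest of the walk dominates it. *)
Lemma minimal_avoids_x0 l p :
  stub_minimal B v L l p -> stub_col l = c -> stub_at l != x0 ->
  walk_in G (B :\ x0) (stub_at l) v p.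
Proof.
move=> [/andP[lL walk_l] not_dom] lc lx.
have [l0L l0c _] := stubs_atP _ _ _ _ l0_in.
have r0_le : r0 <= stub_cost l by apply/l0_cheapest/stubs_atP;
  split=> //; apply: walk_in_start walk_l.
have x0l : x0 != stub_at l by rewrite eq_sym.
have [//|[e [p1 [p2 [pe walk_p2]]]]] := walk_in_avoid_or_through x0l walk_l.
exfalso; apply: not_dom; exists l0, p2; split; first by rewrite /stub_path l0L.
rewrite pe -cat_cons; split=> [c'|].
  rewrite /svec /point wc_cat l0c lc; have := wc_ge0 c' (e :: p1).
  by case: (c' == c); lra.
exists (Defs.col G e); rewrite /svec /point wc_cat l0c lc.
by have := wc_first_gt0 e p1; case: (_ == c); lra.
Qed.

Lemma reduce_path l p :
  x0 != v -> stub_minimal B v L l p -> stub_col l = c ->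
  exists m q, stub_path (B :\ x0) v reduced_stubs m q /\
              forall c', svec m q c' = svec l p c' - point c r0 c'.
Proof.
move=> x0v min_lp lc; have [/andP[lL walk_l] _] := min_lp.
have [lx | lx] := eqVneq (stub_at l) x0.
  have lr := minimal_from_x0_cost min_lp lc lx.
  move: walk_l; rewrite lx; case: p min_lp => [|e q] _ /=.
    by case/andP=> _ /eqP x0v'; rewrite x0v' eqxx in x0v.
  case/and3P=> _ /eqP se walk_q.
  exists (edge_stub e), q; split.
    rewrite /stub_path walk_q andbT mem_cat; apply/orP; right.
    by apply: map_f; rewrite mem_filter mem_enum se eqxx.
  by move=> c'; rewrite svec_edge_stub /svec /point lc lr; case: (c' == c); lra.
exists (stub_at l, c, stub_cost l - r0), p; split.
  rewrite /stub_path (minimal_avoids_x0 min_lp lc lx) andbT mem_cat; apply/orP; left.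
  by apply: (map_f (fun l => (stub_at l, c, stub_cost l - r0))); apply/stubs_atP;
    split=> //; apply: walk_in_start walk_l.
by move=> c'; rewrite /svec /point lc /=; case: (c' == c); lra.
Qed.

(* ... and that reduced stub path is minimal, since a dominating one would
   lift to a stub path dominating the original. *)
Lemma reduce_minimal l p :
  x0 != v -> stub_minimal B v L l p -> stub_col l = c ->
  exists m q, stub_minimal (B :\ x0) v reduced_stubs m q /\
              forall c', svec m q c' = svec l p c' - point c r0 c'.
Proof.
move=> x0v min_lp lc; have [_ not_dom] := min_lp.
have [m [q [path_mq mq_eq]]] := reduce_path x0v min_lp lc.
exists m, q; split=> //; split=> // [[m' [q' [path_mq' [le_mq' [c1 lt_mq']]]]]].
have [l' [p' [path_lp' lp'_eq]]] := lift_reduced path_mq'.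
apply: not_dom; exists l', p'; split=> //; split.
  by move=> c'; rewrite lp'_eq; have := le_mq' c'; rewrite mq_eq; lra.
by exists c1; rewrite lp'_eq; have := mq_eq c1; lra.
Qed.

(* At the target, the empty walk from l0 is minimal, so it is the only
   minimal vector of colour c. *)
Lemma minimal_at_target l p :
  x0 = v -> stub_minimal B v L l p -> stub_col l = c ->
  forall c', svec l p c' = svec l0 [::] c'.
Proof.
move=> x0v [/andP[lL walk_l] not_dom] lc c'.
have [l0L l0c l0B] := stubs_atP _ _ _ _ l0_in.
have r0_le : r0 <= stub_cost l by apply/l0_cheapest/stubs_atP;
  split=> //; apply: walk_in_start walk_l.
have le_l0 c1 : svec l0 [::] c1 <= svec l p c1.
  rewrite /svec /point wc_nil l0c lc; have := wc_ge0 c1 p.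
  by case: (c1 == c); lra.
apply/eqP; rewrite eq_le le_l0 andbT leNgt; apply/negP => lt_l0; apply: not_dom.
exists l0, [::]; split; last by split=> //; exists c'.
by rewrite /stub_path l0L /= l0B x0v eqxx.
Qed.

End Reduction.

Lemma colour_class_bound (v : V) n (B : {set V}) (L : seq stub) (c : M) :
  (forall (B' : {set V}) (L' : seq stub) (W : seq {ffun M -> R}),
     #|B'| = n -> uniq W ->
     (forall f, f \in W -> exists c', minimal_value B' v L' c' f) ->
     (size W <= #|M| ^ n)%N) ->
  #|B| = n.+1 ->
  forall W : seq {ffun M -> R}, uniq W ->
  (forall f, f \in W -> minimal_value B v L c f) -> (size W <= #|M| ^ n)%N.
Proof.
move=> IH cardB W uW Wmin.
have [no_stub | /(seq_argmin stub_cost) [l0 l0_in l0_cheapest]] :=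
  eqVneq (stubs_at B L c) [::].
  case: W Wmin {uW} => // f W Wmin.
  have [l [p [min_lp lc _]]] := Wmin f (mem_head _ _).
  by have := minimal_in_stubs_at min_lp; rewrite lc no_stub.
have [x0v | x0v] := eqVneq (stub_at l0) v.
  pose f0 : {ffun M -> R} := [ffun c' => svec l0 [::] c'].
  have W_f0 : {subset W <= [:: f0]}.
    move=> f /Wmin [l [p [min_lp lc f_eq]]]; rewrite inE; apply/eqP/ffunP => c'.
    by rewrite ffunE f_eq (minimal_at_target l0_in l0_cheapest x0v min_lp lc).
  apply: (leq_trans (uniq_leq_size uW W_f0)).
  have M_gt0 : (0 < #|M|)%N by apply/card_gt0P; exists c.
  by rewrite /= expn_gt0 M_gt0.
pose unshift (f : {ffun M -> R}) := [ffun c' => f c' - point c (stub_cost l0) c'].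
have [_ _ l0B] := stubs_atP _ _ _ _ l0_in.
rewrite -(size_map unshift W).
apply: (IH (B :\ stub_at l0) (reduced_stubs B L c l0)).
- by move: cardB; rewrite (cardsD1 (stub_at l0) B) l0B add1n => -[].
- rewrite map_inj_uniq // => f g /ffunP eq_fg; apply/ffunP => c'.
  by have := eq_fg c'; rewrite !ffunE; lra.
- move=> _ /mapP[f fW ->]; have [l [p [min_lp lc f_eq]]] := Wmin f fW.
  have [m [q [min_mq mq_eq]]] := reduce_minimal l0_in l0_cheapest x0v min_lp lc.
  by exists (stub_col m), m, q; split=> // c'; rewrite ffunE f_eq mq_eq.
Qed.

Theorem minimal_values_bound (v : V) n :
  forall (B : {set V}) (L : seq stub) (W : seq {ffun M -> R}),
  #|B| = n -> uniq W ->
  (forall f, f \in W -> exists c, minimal_value B v L c f) ->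
  (size W <= #|M| ^ n)%N.
Proof.
elim: n => [|n IH] B L W cardB uW Wmin.
  case: W Wmin {uW} => // f W Wmin.
  have [c [l [p [min_lp _ _]]]] := Wmin f (mem_head _ _).
  have /stubs_atP[_ _] := minimal_in_stubs_at min_lp.
  by rewrite (cards0_eq cardB) inE.
rewrite expnS; apply: (cover_bound uW Wmin) => c Wc uWc Wc_min.
exact: (colour_class_bound IH cardB uWc Wc_min).
Qed.

Section Paths.
Variables u v : V.

Definition out_stubs : seq stub := [seq edge_stub e | e <- enum E & src G e == u].

Lemma is_path_cons e q :
  is_path G u v (e :: q) <->
  src G e = u /\ walk_in G ([set: V] :\ u) (dst G e) v q.
Proof.
rewrite /is_path walk_inE all_setD1 /=.
split=> [[-> path_q last_q uniq_q] | [-> /and5P[path_q /eqP last_q uniq_q u_notin _]]].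
  split=> //; rewrite path_q last_q eqxx /= in_setT /=.
  case/and3P: uniq_q => -> -> -> /=.
  by apply/allP => x _; apply: in_setT.
by split=> //=; rewrite u_notin.
Qed.

Lemma minimal_path_value p :
  minimal_path G u v p ->
  exists c, minimal_value ([set: V] :\ u) v out_stubs c (wvec G p).
Proof.
case: p => [[[]] | e q [path_eq not_dom]].
have [se walk_q] := (is_path_cons e q).1 path_eq.
exists (Defs.col G e), (edge_stub e), q; split=> //; last first.
  by move=> c; rewrite ffunE svec_edge_stub.
split.
  rewrite /stub_path walk_q andbT; apply: map_f.
  by rewrite mem_filter mem_enum se eqxx.
move=> [_ [q' [/andP[/mapP[e' e'_in ->] walk_q'] [le_v [c lt_v]]]]].
move: e'_in; rewrite mem_filter mem_enum andbT => /eqP se'.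
apply: not_dom; exists (e' :: q'); split; first exact/is_path_cons.
split; first by move=> c'; rewrite -!svec_edge_stub.
by exists c; rewrite -!svec_edge_stub.
Qed.

End Paths.
End Stubs.

Lemma incomparable_wvec_uniq (R : realFieldType) (V E M : finType)
    (G : wcgraph R V E M) (S : seq (seq E)) :
  uniq S ->
  (forall p q, p \in S -> q \in S -> p != q -> incomparable G p q) ->
  uniq [seq wvec G p | p <- S].
Proof.
move=> uS Sinc; rewrite map_inj_in_uniq // => p q pS qS eq_pq.
apply/eqP/negPn/negP => ne; have [not_le _] := Sinc p q pS qS ne.
apply: not_le => c.
by have := congr1 (fun f : {ffun M -> R} => f c) eq_pq; rewrite !ffunE => ->.
Qed.

Theorem theorem2 (R : realFieldType) (V E M : finType) (G : wcgraph R V E M)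
  (HG : wf_wcgraph G) (Hn : (2 <= #|V|)%N) (u v : V) (Huv : u != v) :
  (forall S : seq (seq E),
     uniq S ->
     (forall p, p \in S -> minimal_path G u v p) ->
     (forall p q, p \in S -> q \in S -> p != q -> incomparable G p q) ->
     (size S <= #|M| ^ (#|V| - 1))%N)
  /\
  (forall W : seq {ffun M -> R},
     uniq W ->
     (forall x, x \in W -> exists p, minimal_path G u v p /\ x = wvec G p) ->
     (size W <= #|M| ^ (#|V| - 1))%N).
Proof.
have w_gt0 : forall e, 0 < w G e by case: HG => _ [].
have card_usable : #|[set: V] :\ u| = (#|V| - 1)%N.
  by rewrite -cardsT [#|[set: V]|](cardsD1 u) in_setT add1n subSS subn0.
have values_bound W : uniq W ->
    (forall x, x \in W -> exists p, minimal_path G u v p /\ x = wvec G p) ->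
    (size W <= #|M| ^ (#|V| - 1))%N.
  move=> uW Wmin; apply: (minimal_values_bound w_gt0 (v := v) (L := out_stubs G u) card_usable uW).
  by move=> f /Wmin[p [min_p ->]]; apply: minimal_path_value.
split=> // S uS Smin Sinc.
rewrite -(size_map (wvec G) S); apply: values_bound.
  exact: incomparable_wvec_uniq.
by move=> _ /mapP[p pS ->]; exists p; split=> //; apply: Smin.
Qed.
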